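(* Let $G=(V,E)$ be an undirected graph with edge capacities $u_e\in\mathbb{Z}_{\ge0}$ for all $e\in E$, sources $s_1,s_2$, sinks $t_1,t_2$, and let $k_1,k_2\in\mathbb{Z}_{\ge0}$. Let $d_1,d_2>0$ be demands with $d_1/d_2=k_1/k_2$. Then a maximal totally uniform $(k_1,k_2)$-splittable flow provides a $\tfrac12$-approximation of a maximal concurrent $(k_1,k_2)$-splittable flow for these demands: its concurrent objective value $\min_{i\in\{1,2\}}\tfrac{1}{d_i}\sum_{j=1}^{k_i}f^i_j$ is at least half the maximum of this objective over all $(k_1,k_2)$-splittable flows.
   Context: A $(k_1,k_2)$-splittable flow consists of $k_1$ $s_1$--$t_1$-paths carrying flow values $f^1_1,\dots,f^1_{k_1}\ge0$ and $k_2$ $s_2$--$t_2$-paths carrying flow values $f^2_1,\dots,f^2_{k_2}\ge0$, such that for every edge $e$ the total flow of all paths (counted with multiplicity, both commodities) containing $e$ is at most $u_e$; paths may repeat and values may be $0$ (no uniformity required). It is totally uniform if all $k_1+k_2$ paths carry the same value $x$; a maximal totally uniform flow is one maximizing $x$. A maximal concurrent $(k_1,k_2)$-splittable flow for demands $d_1,d_2$ is a $(k_1,k_2)$-splittable flow maximizing $\min_{i\in\{1,2\}}\frac{1}{d_i}\sum_{j=1}^{k_i}f^i_j$. *)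

From HB Require Import structures.
From mathcomp Require Import all_boot all_order all_algebra.
From mathcomp Require Import reals.
Set Implicit Arguments. Unset Strict Implicit. Unset Printing Implicit Defensive.
Import Order.TTheory GRing.Theory Num.Theory.
Local Open Scope ring_scope.

(* An undirected (multi)graph: vertices V, edges E, each edge e has the
   unordered pair of endpoints given by [ends e] (order irrelevant). *)
Section Flows.
Variables (V E : finType) (ends : E -> V * V).

Definition joins (e : E) (x y : V) : bool :=
  (ends e == (x, y)) || (ends e == (y, x)).

(* p is a (simple) s--t path: a list of edges e_1 .. e_m together with
   pairwise distinct vertices s = v_0, v_1, .., v_m = t such that e_i joins
   v_{i-1} and v_i. *)
Definition is_path (s t : V) (p : seq E) : Prop :=
  exists vs : seq V,
    [/\ size vs = size p, uniq (s :: vs), last s vs = t &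
        all (fun evw : E * (V * V) => joins evw.1 evw.2.1 evw.2.2)
            (zip p (zip (s :: vs) vs))].

Variable R : realType.
Variables (u : E -> nat) (s1 t1 s2 t2 : V) (k1 k2 : nat).

Record kflow := KFlow {
  path1 : 'I_k1 -> seq E;
  val1  : 'I_k1 -> R;
  path2 : 'I_k2 -> seq E;
  val2  : 'I_k2 -> R }.

Definition load (F : kflow) (e : E) : R :=
  \sum_(j < k1 | e \in path1 F j) val1 F j +
  \sum_(j < k2 | e \in path2 F j) val2 F j.

Definition splittable (F : kflow) : Prop :=
  [/\ forall j, is_path s1 t1 (path1 F j),
      forall j, is_path s2 t2 (path2 F j),
      forall j, 0 <= val1 F j,
      forall j, 0 <= val2 F j &
      forall e, load F e <= (u e)%:R].

Definition totally_uniform (F : kflow) (x : R) : Prop :=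
  [/\ splittable F, forall j, val1 F j = x & forall j, val2 F j = x].

Definition max_totally_uniform (F : kflow) (x : R) : Prop :=
  totally_uniform F x /\ forall (G : kflow) (y : R), totally_uniform G y -> y <= x.

Definition concurrent_value (d1 d2 : R) (F : kflow) : R :=
  Num.min ((\sum_(j < k1) val1 F j) / d1) ((\sum_(j < k2) val2 F j) / d2).
End Flows.

(* Let G be any splittable flow with concurrent value c > 0 and put
   y := c d1 / (2 k1), which equals c d2 / (2 k2) because d1 / d2 = k1 / k2.
   Commodity i of G then carries at least 2 k_i y.  Distribute k_i paths of
   value y over the paths of G so that a path of value g receives at most
   g / y of them; rounding down loses less than y per path of G, so 2 k_i y is
   enough room.  The new flow is totally uniform with value y and loads every
   edge no more than G does, so y <= x, and F reaches k_i x / d_i >= c / 2. *)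
From Pilot Require Import Defs.
From HB Require Import structures.
From mathcomp Require Import all_boot all_order all_algebra.
From mathcomp Require Import reals.
From mathcomp Require Import ring lra.
Set Implicit Arguments. Unset Strict Implicit. Unset Printing Implicit Defensive.
Import Order.TTheory GRing.Theory Num.Theory.
Local Open Scope ring_scope.

Lemma exists_uniform_assignment (R : realFieldType) (n m : nat) (y : R)
    (g : 'I_n -> R) :
  0 < y -> (forall j, 0 <= g j) -> (m + n)%:R * y <= \sum_j g j ->
  exists a : 'I_m -> 'I_n,
    forall P : pred 'I_n, \sum_(i | P (a i)) y <= \sum_(j | P j) g j.
Proof.
move=> y_gt0; elim: m g => [|m IHm] g g_ge0 g_sum.
  have a0 : 'I_0 -> 'I_n by case.
  by exists a0 => P; rewrite big_ord0; apply: sumr_ge0.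
have [j0 y_le_gj0] : exists j0, y <= g j0.
  apply/existsP; apply: contraT; rewrite negb_exists => /forallP /= lt_gy.
  have : \sum_j g j <= \sum_(j < n) y by apply: ler_sum => j _; rewrite ltW // ltNge.
  rewrite sumr_const card_ord -mulr_natl; move: g_sum; rewrite natrD.
  have : 0 < m.+1%:R * y by rewrite mulr_gt0 ?ltr0n.
  lra.
pose g' j := g j - (j == j0)%:R * y.
have sum_g' (P : pred 'I_n) :
    \sum_(j | P j) g' j = \sum_(j | P j) g j - (P j0)%:R * y.
  rewrite sumrB; congr (_ - _); case: (boolP (P j0)) => P_j0.
    rewrite (bigD1 j0) //= eqxx mul1r big1 ?addr0 // => j /andP [_ /negbTE ->].
    by rewrite mul0r.
  rewrite mul0r big1 // => j P_j; case: eqP P_j => [->|_]; first by rewrite (negbTE P_j0).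
  by rewrite mul0r.
have [a a_le] : exists a : 'I_m -> 'I_n,
    forall P : pred 'I_n, \sum_(i | P (a i)) y <= \sum_(j | P j) g' j.
  apply: IHm => [j|].
    by rewrite /g'; case: eqP => [->|_]; rewrite ?mul1r ?mul0r ?subr_ge0 ?subr0.
  by rewrite sum_g' /= -addn1 natrD; move: g_sum; rewrite addSn -addn1 !natrD; lra.
exists (fun i => if unlift ord0 i is Some i' then a i' else j0) => P.
rewrite big_mkcond big_ord_recl unlift_none /=.
under eq_bigr do rewrite liftK.
rewrite -big_mkcond /=; move: (a_le P); rewrite sum_g'.
by case: (P j0) => /=; lra.
Qed.

Section UniformSubflow.
Variables (V E : finType) (ends : E -> V * V) (R : realType).
Variables (u : E -> nat) (s1 t1 s2 t2 : V) (k1 k2 : nat).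

Lemma totally_uniform_of_splittable (G : kflow E R k1 k2) (y : R) :
  splittable ends u s1 t1 s2 t2 G -> 0 < y ->
  (k1 + k1)%:R * y <= \sum_j Defs.val1 G j -> (k2 + k2)%:R * y <= \sum_j val2 G j ->
  exists H : kflow E R k1 k2, totally_uniform ends u s1 t1 s2 t2 H y.
Proof.
move=> [G_path1 G_path2 G_ge0_1 G_ge0_2 G_load] y_gt0 G_sum1 G_sum2.
have [a1 a1_le] := exists_uniform_assignment y_gt0 G_ge0_1 G_sum1.
have [a2 a2_le] := exists_uniform_assignment y_gt0 G_ge0_2 G_sum2.
exists (KFlow (path1 G \o a1) (fun=> y) (path2 G \o a2) (fun=> y)).
split=> //; split=> [j|j|j|j|e] /=;
  [exact: G_path1 | exact: G_path2 | exact: ltW | exact: ltW |].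
apply: le_trans (G_load e); apply: lerD.
- exact: (a1_le (fun j => e \in path1 G j)).
- exact: (a2_le (fun j => e \in path2 G j)).
Qed.

Variables (d1 d2 : R).
Hypotheses (d1_gt0 : 0 < d1) (d2_gt0 : 0 < d2).

Lemma concurrent_value_ge0 (G : kflow E R k1 k2) :
  splittable ends u s1 t1 s2 t2 G -> 0 <= concurrent_value d1 d2 G.
Proof.
move=> [_ _ G_ge0_1 G_ge0_2 _]; rewrite le_min.
have sum1_ge0 : 0 <= \sum_j Defs.val1 G j by apply: sumr_ge0.
have sum2_ge0 : 0 <= \sum_j val2 G j by apply: sumr_ge0.
by rewrite !divr_ge0 // ltW.
Qed.

Lemma concurrent_value_const (F : kflow E R k1 k2) (x : R) :
  (forall j, Defs.val1 F j = x) -> (forall j, val2 F j = x) ->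
  concurrent_value d1 d2 F = Num.min (k1%:R * x / d1) (k2%:R * x / d2).
Proof.
move=> F1 F2; rewrite /concurrent_value.
under eq_bigr do rewrite F1; under [in X in Num.min _ X]eq_bigr do rewrite F2.
by rewrite !sumr_const !card_ord -[x *+ k1]mulr_natl -[x *+ k2]mulr_natl.
Qed.

End UniformSubflow.

Theorem mainTheorem8 (V E : finType) (ends : E -> V * V) (R : realType)
  (u : E -> nat) (s1 t1 s2 t2 : V) (k1 k2 : nat) (d1 d2 : R) :
  0 < d1 -> 0 < d2 -> d1 * k2%:R = d2 * k1%:R ->
  forall (F : kflow E R k1 k2) (x : R),
    max_totally_uniform ends u s1 t1 s2 t2 F x ->
    forall G : kflow E R k1 k2, splittable ends u s1 t1 s2 t2 G ->
      concurrent_value d1 d2 G / 2 <= concurrent_value d1 d2 F.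
Proof.
move=> d1_gt0 d2_gt0 d_ratio F x [[F_split F1 F2] F_max] G G_split.
set c := concurrent_value d1 d2 G.
have [c_le0|c_gt0] := leP c 0.
  by apply: le_trans (concurrent_value_ge0 d1_gt0 d2_gt0 F_split); lra.
have [G_sum1 G_sum2] : c * d1 <= \sum_j Defs.val1 G j /\ c * d2 <= \sum_j val2 G j.
  by rewrite -!ler_pdivlMr // !ge_min !lexx ?orbT.
have dom_gt0 n (f : 'I_n -> R) : 0 < \sum_j f j -> (0 < n)%N.
  by case: n f => [f|//]; rewrite big_ord0 ltxx.
have k1_gt0 : 0 < k1%:R :> R by rewrite ltr0n (dom_gt0 _ (Defs.val1 G)) //; nra.
have k2_gt0 : 0 < k2%:R :> R by rewrite ltr0n (dom_gt0 _ (val2 G)) //; nra.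
set y := c * d1 / (2 * k1%:R).
have k1_y : k1%:R * y = c * d1 / 2 by rewrite /y; field; lra.
have k2_y : k2%:R * y = c * d2 / 2.
  transitivity (c * (d1 * k2%:R) / (2 * k1%:R)); first by rewrite /y; field; lra.
  by rewrite d_ratio; field; lra.
have [H H_unif] : exists H : kflow E R k1 k2, totally_uniform ends u s1 t1 s2 t2 H y.
  by apply: (totally_uniform_of_splittable G_split); rewrite ?natrD; nra.
have y_le_x := F_max H y H_unif.
rewrite (concurrent_value_const _ _ F1 F2) le_min.
by rewrite !ler_pdivlMr //; apply/andP; split; nra.
Qed.
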